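(* For $|q|<1$, $$\sum_{n=0}^\infty\frac{(-1)^n(q;q^2)_{2n}\,q^{2n^2+4n}}{(q^8;q^8)_n(-q^2;q^4)_{n+1}}=(-q^9,-q^7,q^8;q^8)_\infty\frac{(q^2;q^4)_\infty}{(q^4;q^4)_\infty}.$$
   Context: $(a;q)_n=\prod_{k=0}^{n-1}(1-aq^k)$, $(a;q)_\infty=\prod_{k\ge0}(1-aq^k)$, $(a_1,\dots,a_r;q)_\infty=\prod_i(a_i;q)_\infty$. *)

From Stdlib Require Import Reals.
Open Scope R_scope.

Definition Cplx : Type := (R * R)%type.
Definition RtoC (x : R) : Cplx := (x, 0).
Definition C0 : Cplx := (0, 0).
Definition C1 : Cplx := (1, 0).
Definition Cadd (z w : Cplx) : Cplx := (fst z + fst w, snd z + snd w).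
Definition Copp (z : Cplx) : Cplx := (- fst z, - snd z).
Definition Csub (z w : Cplx) : Cplx := Cadd z (Copp w).
Definition Cmul (z w : Cplx) : Cplx :=
  (fst z * fst w - snd z * snd w, fst z * snd w + snd z * fst w).
Definition Cinv (z : Cplx) : Cplx :=
  (fst z / (fst z ^ 2 + snd z ^ 2), - snd z / (fst z ^ 2 + snd z ^ 2)).
Definition Cdiv (z w : Cplx) : Cplx := Cmul z (Cinv w).
Definition Cnorm (z : Cplx) : R := sqrt (fst z ^ 2 + snd z ^ 2).
Fixpoint Cpow (z : Cplx) (n : nat) : Cplx :=
  match n with O => C1 | S m => Cmul (Cpow z m) z end.

Definition Ccv (u : nat -> Cplx) (l : Cplx) : Prop :=
  forall eps : R, eps > 0 -> exists N : nat,
    forall n : nat, (n >= N)%nat -> Cnorm (Csub (u n) l) < eps.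

(* Partial sums: Cpsum f n = f 0 + ... + f (n-1). *)
Fixpoint Cpsum (f : nat -> Cplx) (n : nat) : Cplx :=
  match n with O => C0 | S m => Cadd (Cpsum f m) (f m) end.

Fixpoint qpoch (a q : Cplx) (n : nat) : Cplx :=
  match n with
  | O => C1
  | S m => Cmul (qpoch a q m) (Csub C1 (Cmul a (Cpow q m)))
  end.

Definition qpoch_inf_is (a q L : Cplx) : Prop := Ccv (fun n => qpoch a q n) L.

(* The series is the case a = q, Q = q^4, c = -q^6 of the q-analogue of Bailey's summation
     S(c) := sum_n T_n(a, Q/a, c) = (ac;Q^2)_oo (cQ/a;Q^2)_oo / (c;Q)_oo   (|Q| < |a| < 1, |c| < 1),
     T_n(a, b, c) := (a;Q)_n (b;Q)_n c^n Q^(n(n-1)/2) / ((c;Q)_n (Q^2;Q^2)_n),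
   once (q;q^2)_2n = (q;q^4)_n (q^3;q^4)_n and (-q^2;q^4)_(n+1) = (1+q^2) (-q^6;q^4)_n are used
   on the left and (q^4;q^4)_oo = (q^2;q^4)_oo (-q^2;q^4)_oo (q^8;q^8)_oo on the right.
   The summation follows from the contiguous relation
     (1 - ac) sum_n T_n(1/a, aQ, cQ) = (1 - c) sum_n T_n(a, Q/a, c),
   whose partial sums differ by a telescoping remainder that tends to 0. Applied to a and then
   to 1/a it gives (1 - ac)(1 - cQ/a) S(cQ^2) = (1 - c)(1 - cQ) S(c); iterating N times and
   letting N -> oo, where S(cQ^(2N)) -> S(0) = 1, identifies S(c) with the product. *)

From Stdlib Require Import Reals Lra Lia Psatz Field.
From Coquelicot Require Import Coquelicot.
(* Imported last so that its [C1] is not shadowed by [Reals.Cos_rel.C1]. *)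
From Pilot Require Import Defs.
Open Scope R_scope.

(* [Defs] builds the complex field on [R * R] exactly as Coquelicot's [C] does. *)
Lemma Cfield : field_theory C0 C1 Cadd Cmul Csub Copp Cdiv Cinv (@eq Cplx).
Proof. exact C_field_theory. Qed.
Add Field Cfield_f : Cfield.

Lemma C1_neq0 : C1 <> C0.
Proof. intro H. injection H. exact R1_neq_R0. Qed.

Ltac fld := field; repeat split; try assumption; try exact C1_neq0.

Lemma Csub_0_r z : Csub z C0 = z.
Proof. field. Qed.
Lemma Csub_eq0 z w : Csub z w = C0 -> z = w.
Proof. intro E. replace z with (Cadd (Csub z w) w) by field. rewrite E. field. Qed.

Lemma Cnorm_mul z w : Cnorm (Cmul z w) = Cnorm z * Cnorm w.
Proof. exact (Cmod_mult z w). Qed.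
Lemma Cnorm_add z w : Cnorm (Cadd z w) <= Cnorm z + Cnorm w.
Proof. exact (Cmod_triangle z w). Qed.
Lemma Cnorm_opp z : Cnorm (Copp z) = Cnorm z.
Proof. exact (Cmod_opp z). Qed.
Lemma Cnorm_ge0 z : 0 <= Cnorm z.
Proof. exact (Cmod_ge_0 z). Qed.
Lemma Cnorm_C1 : Cnorm C1 = 1.
Proof. exact Cmod_1. Qed.
Lemma Cnorm_C0 : Cnorm C0 = 0.
Proof. exact Cmod_0. Qed.
Lemma Cnorm_eq0 z : Cnorm z = 0 -> z = C0.
Proof. exact (Cmod_eq_0 z). Qed.
Lemma Cnorm_inv z : z <> C0 -> Cnorm (Cinv z) = / Cnorm z.
Proof. exact (Cmod_inv z). Qed.
Lemma Cnorm_div z w : w <> C0 -> Cnorm (Cdiv z w) = Cnorm z / Cnorm w.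
Proof. exact (Cmod_div z w). Qed.
Lemma Cnorm_pow z n : Cnorm (Cpow z n) = Cnorm z ^ n.
Proof. induction n as [|n IH]; simpl; [apply Cnorm_C1|]. rewrite Cnorm_mul, IH. ring. Qed.

Lemma Cnorm_sub_ge z w : Cnorm z - Cnorm w <= Cnorm (Csub z w).
Proof.
  assert (H := Cnorm_add (Csub z w) w).
  replace (Cadd (Csub z w) w) with z in H by field. lra.
Qed.
Lemma Cnorm_1_sub_ge z : 1 - Cnorm z <= Cnorm (Csub C1 z).
Proof. rewrite <- Cnorm_C1. apply Cnorm_sub_ge. Qed.
Lemma Cnorm_1_sub_le z : Cnorm (Csub C1 z) <= 1 + Cnorm z.
Proof. rewrite <- Cnorm_C1, <- (Cnorm_opp z). apply Cnorm_add. Qed.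

Lemma Cnorm_pos z : z <> C0 -> 0 < Cnorm z.
Proof.
  intro H. destruct (Cnorm_ge0 z) as [h|h]; [exact h|].
  symmetry in h. apply Cnorm_eq0 in h. contradiction.
Qed.
Lemma Cnorm_neq0 z : 0 < Cnorm z -> z <> C0.
Proof. intros H E. subst. rewrite Cnorm_C0 in H. lra. Qed.
Lemma Csub1_neq0 z : Cnorm z < 1 -> Csub C1 z <> C0.
Proof. intro H. apply Cnorm_neq0. generalize (Cnorm_1_sub_ge z). lra. Qed.

Lemma Rabs_fst_le_Cnorm z : Rabs (fst z) <= Cnorm z.
Proof. exact (Rle_trans _ _ _ (Rmax_l _ _) (Rmax_Cmod z)). Qed.
Lemma Rabs_snd_le_Cnorm z : Rabs (snd z) <= Cnorm z.
Proof. exact (Rle_trans _ _ _ (Rmax_r _ _) (Rmax_Cmod z)). Qed.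
Lemma Cnorm_le_Rabs_fst_snd z : Cnorm z <= Rabs (fst z) + Rabs (snd z).
Proof.
  assert (H1 := Rabs_pos (fst z)). assert (H2 := Rabs_pos (snd z)).
  unfold Cnorm. rewrite <- (sqrt_pow2 (Rabs (fst z) + Rabs (snd z))) by lra.
  apply sqrt_le_1_alt. rewrite <- (pow2_abs (fst z)), <- (pow2_abs (snd z)). nra.
Qed.

Lemma Cpow_add z m n : Cpow z (m + n) = Cmul (Cpow z m) (Cpow z n).
Proof.
  induction n as [|n IH]; simpl; [rewrite Nat.add_0_r; field|].
  rewrite Nat.add_succ_r. simpl. rewrite IH. field.
Qed.
Lemma Cpow_mul z m n : Cpow z (m * n) = Cpow (Cpow z m) n.
Proof.
  induction n as [|n IH]; simpl; [rewrite Nat.mul_0_r; reflexivity|].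
  rewrite Nat.mul_succ_r, Cpow_add, IH. reflexivity.
Qed.
Lemma Cpow_mul_l z w n : Cpow (Cmul z w) n = Cmul (Cpow z n) (Cpow w n).
Proof. induction n as [|n IH]; simpl; [field|]. rewrite IH. field. Qed.
Lemma Cpow_C0_S k : Cpow C0 (S k) = C0.
Proof. simpl. ring. Qed.
Lemma Cnorm_pow_le_1 z n : Cnorm z <= 1 -> Cnorm (Cpow z n) <= 1.
Proof.
  intro H. rewrite Cnorm_pow, <- (pow1 n). apply pow_incr. split; [apply Cnorm_ge0|exact H].
Qed.
Lemma Cnorm_mul_lt_1 z w : Cnorm z < 1 -> Cnorm w <= 1 -> Cnorm (Cmul z w) < 1.
Proof. intros. rewrite Cnorm_mul. generalize (Cnorm_ge0 z) (Cnorm_ge0 w). nra. Qed.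

Lemma Cinv_neq0 z : z <> C0 -> Cinv z <> C0.
Proof. intros H E. apply C1_neq0. replace C1 with (Cmul z (Cinv z)) by fld. rewrite E. field. Qed.

Lemma Csub1_mul_neq0 z w : Cnorm z < 1 -> Cnorm w <= 1 -> Csub C1 (Cmul z w) <> C0.
Proof. intros. apply Csub1_neq0, Cnorm_mul_lt_1; assumption. Qed.

Lemma Cnorm_pow_le z n : Cnorm z <= 1 -> (1 <= n)%nat -> Cnorm (Cpow z n) <= Cnorm z.
Proof.
  intros Hz Hn. destruct n as [|n]; [lia|]. simpl Cpow. rewrite Cnorm_mul.
  assert (H := Cnorm_pow_le_1 z n Hz). generalize (Cnorm_ge0 z) (Cnorm_ge0 (Cpow z n)). nra.
Qed.

Lemma Cnorm_pow_lt_1 z n : Cnorm z < 1 -> (1 <= n)%nat -> Cnorm (Cpow z n) < 1.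
Proof. intros Hz Hn. eapply Rle_lt_trans; [apply Cnorm_pow_le; [lra|exact Hn]|exact Hz]. Qed.

Lemma Cnorm_pow_lt z n : 0 < Cnorm z < 1 -> (2 <= n)%nat -> Cnorm (Cpow z n) < Cnorm z.
Proof.
  intros Hz Hn. destruct n as [|[|n]]; [lia|lia|]. rewrite Cnorm_pow. simpl.
  assert (H := Cnorm_pow_le_1 z n ltac:(lra)). rewrite Cnorm_pow in H.
  assert (0 <= Cnorm z ^ n) by (apply pow_le; lra). nra.
Qed.

Lemma Rdiv_le_compat x y X Y : 0 <= x <= X -> 0 < Y <= y -> x / y <= X / Y.
Proof.
  intros Hx HY. unfold Rdiv. apply Rmult_le_compat; try lra.
  - apply Rlt_le, Rinv_0_lt_compat. lra.
  - apply Rinv_le_contravar; lra.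
Qed.

Lemma Csub1_pow_sq_neq0 Q n : Cnorm Q < 1 ->
  Csub C1 (Cmul (Cmul Q Q) (Cmul (Cpow Q n) (Cpow Q n))) <> C0.
Proof.
  intro HQ. assert (Hx := Cnorm_pow_le_1 Q n (Rlt_le _ _ HQ)).
  apply Csub1_mul_neq0; [apply Cnorm_mul_lt_1; lra|].
  rewrite Cnorm_mul. generalize (Cnorm_ge0 (Cpow Q n)). nra.
Qed.

Implicit Types (u v : nat -> Cplx) (a b c l z : Cplx).

Lemma Ccv_iff u l : Ccv u l <->
  is_lim_seq (fun n => fst (u n)) (fst l) /\ is_lim_seq (fun n => snd (u n)) (snd l).
Proof.
  split.
  - intro H. split; apply is_lim_seq_Reals; intros e He; destruct (H e He) as [N HN];
      exists N; intros n Hn; eapply Rle_lt_trans; try exact (HN n Hn).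
    + apply (Rabs_fst_le_Cnorm (Csub (u n) l)).
    + apply (Rabs_snd_le_Cnorm (Csub (u n) l)).
  - intros [H1 H2] e He. apply is_lim_seq_Reals in H1, H2.
    destruct (H1 (e/2)) as [N1 HN1]; [lra|]. destruct (H2 (e/2)) as [N2 HN2]; [lra|].
    exists (Nat.max N1 N2). intros n Hn.
    eapply Rle_lt_trans; [apply Cnorm_le_Rabs_fst_snd|].
    assert (h1 := HN1 n ltac:(lia)). assert (h2 := HN2 n ltac:(lia)).
    unfold R_dist, Rminus in *. simpl. lra.
Qed.

Lemma Ccv_unique u l1 l2 : Ccv u l1 -> Ccv u l2 -> l1 = l2.
Proof.
  rewrite !Ccv_iff. intros [H1 H2] [H3 H4]. destruct l1, l2; simpl in *.
  apply is_lim_seq_unique in H1, H2, H3, H4.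
  rewrite H1 in H3. rewrite H2 in H4. injection H3. injection H4. intros -> ->. reflexivity.
Qed.

Lemma Ccv_ext u v l : (forall n, u n = v n) -> Ccv u l -> Ccv v l.
Proof. intros E H e He. destruct (H e He) as [N HN]. exists N. intros n Hn. rewrite <- E. auto. Qed.
Lemma Ccv_const a : Ccv (fun _ => a) a.
Proof. apply Ccv_iff. split; apply is_lim_seq_const. Qed.
Lemma Ccv_add u v a b : Ccv u a -> Ccv v b -> Ccv (fun n => Cadd (u n) (v n)) (Cadd a b).
Proof.
  rewrite !Ccv_iff. intros [] []. split; simpl; apply is_lim_seq_plus'; assumption.
Qed.
Lemma Ccv_opp u a : Ccv u a -> Ccv (fun n => Copp (u n)) (Copp a).
Proof.
  rewrite !Ccv_iff. intros [H1 H2].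
  apply (is_lim_seq_opp _ (Finite _)) in H1, H2. split; assumption.
Qed.
Lemma Ccv_sub u v a b : Ccv u a -> Ccv v b -> Ccv (fun n => Csub (u n) (v n)) (Csub a b).
Proof. intros. apply Ccv_add, Ccv_opp; assumption. Qed.
Lemma Ccv_mul u v a b : Ccv u a -> Ccv v b -> Ccv (fun n => Cmul (u n) (v n)) (Cmul a b).
Proof.
  rewrite !Ccv_iff. intros [] []. simpl. split.
  - apply is_lim_seq_minus'; apply is_lim_seq_mult'; assumption.
  - apply is_lim_seq_plus'; apply is_lim_seq_mult'; assumption.
Qed.

Lemma Cpsum_ext f g N : (forall n, f n = g n) -> Cpsum f N = Cpsum g N.
Proof. intro H. induction N as [|N IH]; simpl; [reflexivity|]. rewrite IH, H. reflexivity. Qed.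

Lemma Cpsum_mul_r f k N : Cpsum (fun n => Cmul (f n) k) N = Cmul (Cpsum f N) k.
Proof. induction N as [|N IH]; simpl; [field|]. rewrite IH. field. Qed.

Lemma Ccv_subseq u l (phi : nat -> nat) :
  (forall n, (n <= phi n)%nat) -> Ccv u l -> Ccv (fun n => u (phi n)) l.
Proof.
  intros Hp H e He. destruct (H e He) as [N HN]. exists N. intros n Hn.
  apply HN. specialize (Hp n). lia.
Qed.

Lemma Ccv_norm_le u l m r : Ccv u l -> (forall n, Cnorm (Csub (u n) m) <= r) ->
  Cnorm (Csub l m) <= r.
Proof.
  intros H Hb. apply Rnot_lt_le. intro Hlt.
  destruct (H (Cnorm (Csub l m) - r)) as [N HN]; [lra|].
  specialize (HN N (le_n _)). specialize (Hb N).
  generalize (Cnorm_sub_ge (Csub l m) (Csub (u N) m)). intro T.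
  replace (Csub (Csub l m) (Csub (u N) m)) with (Copp (Csub (u N) l)) in T by field.
  rewrite Cnorm_opp in T. lra.
Qed.

Lemma Ccv_norm_ge u l d : Ccv u l -> (forall n, d <= Cnorm (u n)) -> d <= Cnorm l.
Proof.
  intros H Hb. apply Rnot_lt_le. intro Hlt.
  destruct (H (d - Cnorm l)) as [N HN]; [lra|].
  specialize (HN N (le_n _)). specialize (Hb N).
  generalize (Cnorm_sub_ge (u N) l). lra.
Qed.

Lemma Ccv_eventually_dominated u l (w : nat -> R) N0 :
  (forall n, (N0 <= n)%nat -> Cnorm (Csub (u n) l) <= w n) -> is_lim_seq w 0 -> Ccv u l.
Proof.
  intros Hb Hw. apply is_lim_seq_Reals in Hw. intros e He. destruct (Hw e He) as [N HN].
  exists (Nat.max N N0). intros n Hn. specialize (HN n ltac:(lia)).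
  unfold R_dist in HN. rewrite Rminus_0_r in HN.
  generalize (Hb n ltac:(lia)) (Rle_abs (w n)). lra.
Qed.

(* The limit of [u] when [u] converges; an unspecified value otherwise. *)
Definition Clim u : Cplx :=
  (real (Lim_seq (fun n => fst (u n))), real (Lim_seq (fun n => snd (u n)))).

Lemma Ccv_Clim u : (exists l, Ccv u l) -> Ccv u (Clim u).
Proof.
  intros [l Hl]. apply Ccv_iff in Hl as [H1 H2]. apply Ccv_iff. unfold Clim. simpl.
  rewrite (is_lim_seq_unique _ _ H1), (is_lim_seq_unique _ _ H2). split; simpl; [exact H1|exact H2].
Qed.

Lemma real_cv_of_geometric_increments (x : nat -> R) M r : 0 <= r < 1 ->
  (forall n, Rabs (x (S n) - x n) <= M * r ^ n) -> exists s : R, is_lim_seq x s.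
Proof.
  intros Hr Hx.
  assert (Hs : ex_series (fun n => x (S n) - x n)).
  { apply (@ex_series_le R_AbsRing R_CompleteNormedModule _ (fun n => M * r ^ n)); [exact Hx|].
    apply (ex_series_scal_l M (fun n => r ^ n)), ex_series_geom. rewrite Rabs_right; lra. }
  destruct Hs as [s Hs]. exists (x O + s).
  apply is_lim_seq_incr_1.
  apply (is_lim_seq_ext (fun n => x O + sum_n (fun k => x (S k) - x k) n)).
  - intro n. induction n as [|n IH].
    + rewrite sum_O. ring.
    + rewrite sum_Sn, <- Rplus_assoc, IH. unfold plus; simpl; ring.
  - apply is_lim_seq_plus'; [apply is_lim_seq_const|exact Hs].
Qed.

Lemma Ccv_of_geometric_increments u M r : 0 <= r < 1 ->
  (forall n, Cnorm (Csub (u (S n)) (u n)) <= M * r ^ n) -> Ccv u (Clim u).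
Proof.
  intros Hr Hu. apply Ccv_Clim.
  destruct (real_cv_of_geometric_increments (fun n => fst (u n)) M r Hr) as [l1 H1].
  { intro n. eapply Rle_trans; [|apply Hu]. apply (Rabs_fst_le_Cnorm (Csub (u (S n)) (u n))). }
  destruct (real_cv_of_geometric_increments (fun n => snd (u n)) M r Hr) as [l2 H2].
  { intro n. eapply Rle_trans; [|apply Hu]. apply (Rabs_snd_le_Cnorm (Csub (u (S n)) (u n))). }
  exists (l1, l2). apply Ccv_iff. split; assumption.
Qed.

Lemma exp_le_compat x y : x <= y -> exp x <= exp y.
Proof.
  intro H. destruct (Rle_lt_or_eq_dec _ _ H) as [h|h];
    [left; apply exp_increasing, h|rewrite h; lra].
Qed.

Lemma exp_neg_le_1_sub x r : 0 <= x <= r -> r < 1 -> exp (- (x / (1 - r))) <= 1 - x.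
Proof.
  intros Hx Hr. rewrite exp_Ropp.
  assert (E := exp_ineq1_le (x / (1 - r))). assert (P := exp_pos (x / (1 - r))).
  assert (K : x <= x / (1 - r) * (1 - x)).
  { unfold Rdiv. rewrite Rmult_assoc.
    assert (Hi : 0 < / (1 - r)) by (apply Rinv_0_lt_compat; lra).
    assert (H1 : / (1 - r) * (1 - r) = 1) by (field; lra).
    assert (1 <= / (1 - r) * (1 - x)) by nra.
    nra. }
  apply (Rmult_le_reg_l (exp (x / (1 - r)))); [exact P|]. rewrite Rinv_r by lra. nra.
Qed.

Lemma qpoch_S a Q n : qpoch a Q (S n) = Cmul (qpoch a Q n) (Csub C1 (Cmul a (Cpow Q n))).
Proof. reflexivity. Qed.

Lemma qpoch_norm_le a Q n : Cnorm Q < 1 -> Cnorm (qpoch a Q n) <= exp (Cnorm a / (1 - Cnorm Q)).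
Proof.
  intro HQ. assert (Hr := Cnorm_ge0 Q). assert (Ha := Cnorm_ge0 a). set (r := Cnorm Q) in *.
  assert (G : Cnorm (qpoch a Q n) <= exp (Cnorm a * (1 - r ^ n) / (1 - r))).
  { induction n as [|n IH]; simpl qpoch.
    - rewrite Cnorm_C1. simpl. replace (Cnorm a * (1 - 1) / (1 - r)) with 0 by (field; lra).
      rewrite exp_0. lra.
    - replace (Cnorm a * (1 - r ^ S n) / (1 - r)) with
        (Cnorm a * (1 - r ^ n) / (1 - r) + Cnorm a * r ^ n) by (simpl; field; lra).
      rewrite Cnorm_mul, exp_plus. apply Rmult_le_compat; try apply Cnorm_ge0; [exact IH|].
      eapply Rle_trans; [apply Cnorm_1_sub_le|].
      rewrite Cnorm_mul, Cnorm_pow. apply exp_ineq1_le. }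
  eapply Rle_trans; [exact G|]. apply exp_le_compat. unfold Rdiv.
  apply Rmult_le_compat_r; [apply Rlt_le, Rinv_0_lt_compat; lra|].
  assert (0 <= r ^ n) by (apply pow_le, Hr). nra.
Qed.

Lemma qpoch_norm_ge a Q r n : Cnorm Q < 1 -> Cnorm a <= r -> r < 1 ->
  exp (- (r / ((1 - Cnorm Q) * (1 - r)))) <= Cnorm (qpoch a Q n).
Proof.
  intros HQ Ha Hr. assert (Hs := Cnorm_ge0 Q). assert (Ha0 := Cnorm_ge0 a). set (s := Cnorm Q) in *.
  assert (G : exp (- (r * (1 - s ^ n) / ((1 - s) * (1 - r)))) <= Cnorm (qpoch a Q n)).
  { induction n as [|n IH]; simpl qpoch.
    - rewrite Cnorm_C1. simpl. replace (r * (1 - 1) / ((1 - s) * (1 - r))) with 0 by (field; lra).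
      rewrite Ropp_0, exp_0. lra.
    - replace (- (r * (1 - s ^ S n) / ((1 - s) * (1 - r)))) with
        (- (r * (1 - s ^ n) / ((1 - s) * (1 - r))) + - (r * s ^ n / (1 - r)))
        by (simpl; field; lra).
      rewrite Cnorm_mul, exp_plus.
      apply Rmult_le_compat; try (left; apply exp_pos); [exact IH|].
      assert (Hsn : 0 <= s ^ n <= 1)
        by (split; [apply pow_le, Hs|rewrite <- (pow1 n); apply pow_incr; lra]).
      eapply Rle_trans; [|apply Cnorm_1_sub_ge]. rewrite Cnorm_mul, Cnorm_pow. fold s.
      eapply Rle_trans; [apply (exp_neg_le_1_sub (r * s ^ n) r); [split; nra|exact Hr]|]. nra. }
  eapply Rle_trans; [|exact G]. apply exp_le_compat, Ropp_le_contravar. unfold Rdiv.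
  apply Rmult_le_compat_r; [apply Rlt_le, Rinv_0_lt_compat, Rmult_lt_0_compat; lra|].
  assert (0 <= s ^ n) by (apply pow_le, Hs). nra.
Qed.

Lemma qpoch_neq0 a Q n : Cnorm Q < 1 -> Cnorm a < 1 -> qpoch a Q n <> C0.
Proof.
  intros HQ Ha. apply Cnorm_neq0.
  eapply Rlt_le_trans; [apply exp_pos|apply (qpoch_norm_ge a Q (Cnorm a)); lra].
Qed.

Lemma qpoch_inf_exists a Q : Cnorm Q < 1 -> exists L, qpoch_inf_is a Q L.
Proof.
  intro HQ. eexists.
  apply (Ccv_of_geometric_increments _ (exp (Cnorm a / (1 - Cnorm Q)) * Cnorm a) (Cnorm Q)).
  { split; [apply Cnorm_ge0|exact HQ]. }
  intro n. rewrite qpoch_S.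
  replace (Csub (Cmul (qpoch a Q n) (Csub C1 (Cmul a (Cpow Q n)))) (qpoch a Q n))
    with (Copp (Cmul (qpoch a Q n) (Cmul a (Cpow Q n)))) by field.
  rewrite Cnorm_opp, !Cnorm_mul, Cnorm_pow, Rmult_assoc.
  apply Rmult_le_compat_r; [apply Rmult_le_pos; [apply Cnorm_ge0|apply pow_le, Cnorm_ge0]|].
  apply qpoch_norm_le, HQ.
Qed.

Lemma qpoch_inf_neq0 a Q L : Cnorm Q < 1 -> Cnorm a < 1 -> qpoch_inf_is a Q L -> L <> C0.
Proof.
  intros HQ Ha HL. apply Cnorm_neq0.
  eapply Rlt_le_trans; [apply exp_pos|].
  apply (Ccv_norm_ge _ _ _ HL). intro n. apply (qpoch_norm_ge a Q (Cnorm a)); lra.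
Qed.

Lemma qpoch_double a Q n :
  qpoch a Q (2 * n) = Cmul (qpoch a (Cmul Q Q) n) (qpoch (Cmul a Q) (Cmul Q Q) n).
Proof.
  induction n as [|n IH]; [simpl; field|].
  replace (2 * S n)%nat with (S (S (2 * n))) by lia. rewrite !qpoch_S, IH.
  replace (Cpow Q (S (2 * n))) with (Cmul (Cpow Q (2 * n)) Q) by reflexivity.
  rewrite Cpow_mul. replace (Cpow Q 2) with (Cmul Q Q) by (simpl; field).
  rewrite Cpow_mul_l. field.
Qed.

Lemma qpoch_S_shift a Q n : qpoch a Q (S n) = Cmul (Csub C1 a) (qpoch (Cmul a Q) Q n).
Proof.
  induction n as [|n IH]; [simpl; field|].
  rewrite qpoch_S, IH, qpoch_S. simpl Cpow. field.
Qed.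

Lemma qpoch_mul_opp a Q n :
  Cmul (qpoch a Q n) (qpoch (Copp a) Q n) = qpoch (Cmul a a) (Cmul Q Q) n.
Proof.
  induction n as [|n IH]; [simpl; field|].
  rewrite !qpoch_S, <- IH, Cpow_mul_l. field.
Qed.

Lemma qpoch_0 Q n : qpoch C0 Q n = C1.
Proof. induction n as [|n IH]; [reflexivity|]. rewrite qpoch_S, IH. field. Qed.

Lemma qpoch_inf_trivial a Q L : a = C0 -> qpoch_inf_is a Q L -> L = C1.
Proof.
  intros -> HL. apply (Ccv_unique _ _ _ HL).
  eapply Ccv_ext; [intro n; symmetry; apply qpoch_0|apply Ccv_const].
Qed.

Fixpoint tri (n : nat) : nat := match n with O => O | S m => (tri m + m)%nat end.

Lemma tri_double n : (2 * tri n + n = n * n)%nat.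
Proof. induction n as [|n IH]; simpl tri; [reflexivity|]. nia. Qed.

Definition bailey_term a b c Q n : Cplx :=
  Cdiv (Cmul (Cmul (Cmul (qpoch a Q n) (qpoch b Q n)) (Cpow c n)) (Cpow Q (tri n)))
       (Cmul (qpoch c Q n) (qpoch (Cmul Q Q) (Cmul Q Q) n)).

Definition bailey_ratio a b c Q n : Cplx :=
  let x := Cpow Q n in
  Cdiv (Cmul (Cmul (Cmul (Csub C1 (Cmul a x)) (Csub C1 (Cmul b x))) c) x)
       (Cmul (Csub C1 (Cmul c x)) (Csub C1 (Cmul (Cmul Q Q) (Cmul x x)))).

Definition bailey_sum a b c Q : Cplx := Clim (Cpsum (bailey_term a b c Q)).

Lemma bailey_term_0 a b c Q : bailey_term a b c Q 0 = C1.
Proof. unfold bailey_term. simpl. fld. Qed.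

Lemma bailey_term_S a b c Q n : Cnorm Q < 1 -> Cnorm c < 1 ->
  bailey_term a b c Q (S n) = Cmul (bailey_term a b c Q n) (bailey_ratio a b c Q n).
Proof.
  intros HQ Hc. assert (HQQ : Cnorm (Cmul Q Q) < 1) by (apply Cnorm_mul_lt_1; lra).
  assert (Hx : Cnorm (Cpow Q n) <= 1) by (apply Cnorm_pow_le_1; lra).
  assert (H1 := qpoch_neq0 c Q n HQ Hc).
  assert (H2 := qpoch_neq0 (Cmul Q Q) (Cmul Q Q) n HQQ HQQ).
  assert (H3 := Csub1_mul_neq0 c (Cpow Q n) Hc Hx).
  assert (H4 := Csub1_pow_sq_neq0 Q n HQ).
  unfold bailey_term, bailey_ratio. simpl tri.
  rewrite Cpow_add, !qpoch_S, Cpow_mul_l. simpl Cpow. fld.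
Qed.

Lemma bailey_term_bound a b Q r : Cnorm Q < 1 -> 0 <= r < 1 -> exists M, 0 <= M /\
  forall c n, Cnorm c <= r -> Cnorm (bailey_term a b c Q n) <= M * Cnorm c ^ n.
Proof.
  intros HQ Hr. set (QQ := Cmul Q Q).
  assert (HQQ : Cnorm QQ < 1) by (apply Cnorm_mul_lt_1; lra).
  set (L := exp (- (r / ((1 - Cnorm Q) * (1 - r))))
            * exp (- (Cnorm QQ / ((1 - Cnorm QQ) * (1 - Cnorm QQ))))).
  set (K := exp (Cnorm a / (1 - Cnorm Q)) * exp (Cnorm b / (1 - Cnorm Q))).
  assert (HL : 0 < L) by (apply Rmult_lt_0_compat; apply exp_pos).
  assert (HK : 0 < K) by (apply Rmult_lt_0_compat; apply exp_pos).
  exists (K / L). split; [apply Rlt_le, Rdiv_lt_0_compat; assumption|].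
  intros c n Hc.
  assert (Hn := qpoch_norm_ge c Q r n HQ Hc ltac:(lra)).
  assert (Hd := qpoch_norm_ge QQ QQ (Cnorm QQ) n HQQ (Rle_refl _) HQQ).
  unfold bailey_term. fold QQ.
  rewrite Cnorm_div by (apply Cnorm_neq0; rewrite Cnorm_mul; apply Rmult_lt_0_compat;
                        eapply Rlt_le_trans; try apply exp_pos; eassumption).
  replace (K / L * Cnorm c ^ n) with (K * Cnorm c ^ n / L) by (field; lra).
  apply Rdiv_le_compat.
  - split; [apply Cnorm_ge0|]. rewrite !Cnorm_mul, !Cnorm_pow.
    assert (Ht : Cnorm Q ^ tri n <= 1) by (rewrite <- Cnorm_pow; apply Cnorm_pow_le_1; lra).
    assert (Ha := qpoch_norm_le a Q n HQ). assert (Hb := qpoch_norm_le b Q n HQ).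
    assert (0 <= Cnorm c ^ n) by (apply pow_le, Cnorm_ge0).
    assert (0 <= Cnorm (qpoch a Q n) * Cnorm (qpoch b Q n))
      by (apply Rmult_le_pos; apply Cnorm_ge0).
    apply Rle_trans with (Cnorm (qpoch a Q n) * Cnorm (qpoch b Q n) * Cnorm c ^ n).
    + rewrite <- (Rmult_1_r (_ * _ * Cnorm c ^ n)) at 2.
      apply Rmult_le_compat_l; [apply Rmult_le_pos|]; assumption.
    + apply Rmult_le_compat_r; [assumption|].
      apply Rmult_le_compat; try apply Cnorm_ge0; assumption.
  - split; [exact HL|]. rewrite Cnorm_mul.
    apply Rmult_le_compat; try (left; apply exp_pos); assumption.
Qed.

Lemma bailey_sum_cv a b c Q : Cnorm Q < 1 -> Cnorm c < 1 ->
  Ccv (Cpsum (bailey_term a b c Q)) (bailey_sum a b c Q).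
Proof.
  intros HQ Hc. destruct (bailey_term_bound a b Q (Cnorm c) HQ) as [M [_ HM]].
  { split; [apply Cnorm_ge0|exact Hc]. }
  apply (Ccv_of_geometric_increments _ M (Cnorm c)); [split; [apply Cnorm_ge0|exact Hc]|].
  intro n. simpl Cpsum.
  replace (Csub (Cadd (Cpsum (bailey_term a b c Q) n) (bailey_term a b c Q n))
                (Cpsum (bailey_term a b c Q) n)) with (bailey_term a b c Q n) by field.
  apply HM, Rle_refl.
Qed.

Lemma bailey_sum_near_1 a b Q r : Cnorm Q < 1 -> 0 <= r < 1 -> exists K,
  forall c, Cnorm c <= r -> Cnorm (Csub (bailey_sum a b c Q) C1) <= K * Cnorm c.
Proof.
  intros HQ Hr. destruct (bailey_term_bound a b Q r HQ Hr) as [M [HM0 HM]].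
  exists (M / (1 - r)). intros c Hc. assert (Hc0 := Cnorm_ge0 c).
  assert (Hcv := bailey_sum_cv a b c Q HQ ltac:(lra)).
  apply (Ccv_norm_le _ _ _ _ (Ccv_subseq _ _ S (fun n => le_S _ _ (le_n n)) Hcv)).
  intro N. apply Rle_trans with (M * Cnorm c * (1 - r ^ N) / (1 - r)).
  - induction N as [|N IH].
    + simpl Cpsum. rewrite bailey_term_0.
      replace (Csub (Cadd C0 C1) C1) with C0 by field. rewrite Cnorm_C0. simpl. lra.
    + replace (Csub (Cpsum (bailey_term a b c Q) (S (S N))) C1) with
        (Cadd (Csub (Cpsum (bailey_term a b c Q) (S N)) C1) (bailey_term a b c Q (S N)))
        by (simpl; field).
      eapply Rle_trans; [apply Cnorm_add|].
      assert (HT := HM c (S N) Hc). simpl pow in HT |- *.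
      assert (Hcr : Cnorm c ^ N <= r ^ N) by (apply pow_incr; lra).
      assert (0 <= M * Cnorm c) by (apply Rmult_le_pos; assumption).
      replace (M * Cnorm c * (1 - r * r ^ N) / (1 - r)) with
        (M * Cnorm c * (1 - r ^ N) / (1 - r) + M * Cnorm c * r ^ N) by (field; lra).
      nra.
  - assert (0 <= M * Cnorm c / (1 - r))
      by (apply Rmult_le_pos; [apply Rmult_le_pos|apply Rlt_le, Rinv_0_lt_compat; lra]; assumption).
    assert (0 <= r ^ N) by (apply pow_le; lra).
    replace (M / (1 - r) * Cnorm c) with (M * Cnorm c / (1 - r)) by (field; lra).
    replace (M * Cnorm c * (1 - r ^ N) / (1 - r)) with
      (M * Cnorm c / (1 - r) - M * Cnorm c / (1 - r) * r ^ N) by (field; lra).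
    nra.
Qed.

Definition bailey_shift_factor a c Q n : Cplx :=
  let x := Cpow Q n in
  Copp (Cdiv (Cmul (Cmul x (Csub C1 (Cmul a x))) (Csub C1 c))
             (Cmul (Csub a x) (Csub C1 (Cmul c x)))).

Section Contiguous.

Variables a c Q : Cplx.
Hypothesis Ha0 : a <> C0.
Hypothesis HQ : Cnorm Q < 1.
Hypothesis Hc : Cnorm c < 1.
Hypothesis Ha : forall n, a <> Cpow Q n.

Lemma sub_pow_neq0 n : Csub a (Cpow Q n) <> C0.
Proof. intro E. apply (Ha n), Csub_eq0, E. Qed.

Lemma bailey_term_shift n :
  bailey_term (Cinv a) (Cmul a Q) (Cmul c Q) Q n =
  Cmul (bailey_term a (Cdiv Q a) c Q n) (bailey_shift_factor a c Q n).
Proof.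
  assert (Hc1 : Csub C1 c <> C0) by (apply Csub1_neq0, Hc).
  induction n as [|n IH].
  - rewrite !bailey_term_0. unfold bailey_shift_factor. simpl.
    assert (H := sub_pow_neq0 0). simpl in H.
    replace (Cmul c C1) with c by field. fld.
  - rewrite (bailey_term_S _ _ (Cmul c Q)), (bailey_term_S _ _ c), IH
      by first [assumption|apply Cnorm_mul_lt_1; lra].
    unfold bailey_shift_factor, bailey_ratio. simpl Cpow.
    assert (H1 := sub_pow_neq0 n). assert (H2 := sub_pow_neq0 (S n)).
    assert (H3 := Csub1_mul_neq0 c _ Hc (Cnorm_pow_le_1 Q n (Rlt_le _ _ HQ))).
    assert (H4 := Csub1_mul_neq0 c _ Hc (Cnorm_pow_le_1 Q (S n) (Rlt_le _ _ HQ))).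
    assert (H5 := Csub1_pow_sq_neq0 Q n HQ).
    simpl Cpow in H2, H4. fld.
Qed.

Lemma bailey_partial_telescope N :
  Csub (Cmul (Csub C1 (Cmul a c)) (Cpsum (bailey_term (Cinv a) (Cmul a Q) (Cmul c Q) Q) N))
       (Cmul (Csub C1 c) (Cpsum (bailey_term a (Cdiv Q a) c Q) N)) =
  Cmul (bailey_term a (Cdiv Q a) c Q N)
       (Cdiv (Cmul (Csub C1 c) (Cmul a (Csub C1 (Cmul (Cpow Q N) (Cpow Q N)))))
             (Csub a (Cpow Q N))).
Proof.
  induction N as [|N IH].
  - rewrite bailey_term_0. simpl. assert (H := sub_pow_neq0 0). simpl in H. fld.
  - simpl Cpsum. rewrite bailey_term_shift.
    transitivity (Cadd
      (Csub (Cmul (Csub C1 (Cmul a c)) (Cpsum (bailey_term (Cinv a) (Cmul a Q) (Cmul c Q) Q) N))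
            (Cmul (Csub C1 c) (Cpsum (bailey_term a (Cdiv Q a) c Q) N)))
      (Cmul (bailey_term a (Cdiv Q a) c Q N)
            (Csub (Cmul (Csub C1 (Cmul a c)) (bailey_shift_factor a c Q N)) (Csub C1 c)))).
    { field. }
    rewrite IH, bailey_term_S by assumption.
    unfold bailey_shift_factor, bailey_ratio. simpl Cpow.
    assert (H1 := sub_pow_neq0 N). assert (H2 := sub_pow_neq0 (S N)). simpl Cpow in H2.
    assert (H3 := Csub1_mul_neq0 c _ Hc (Cnorm_pow_le_1 Q N (Rlt_le _ _ HQ))).
    assert (H4 := Csub1_pow_sq_neq0 Q N HQ).
    fld.
Qed.

Lemma bailey_contiguous :
  Cmul (Csub C1 (Cmul a c)) (bailey_sum (Cinv a) (Cmul a Q) (Cmul c Q) Q) =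
  Cmul (Csub C1 c) (bailey_sum a (Cdiv Q a) c Q).
Proof.
  destruct (bailey_term_bound a (Cdiv Q a) Q (Cnorm c) HQ) as [M [HM0 HM]].
  { split; [apply Cnorm_ge0|exact Hc]. }
  assert (Hap := Cnorm_pos a Ha0).
  destruct (pow_lt_1_zero (Cnorm Q) ltac:(rewrite Rabs_right; [lra|apply Rle_ge, Cnorm_ge0])
              (Cnorm a / 2) ltac:(lra)) as [N0 HN0].
  apply Csub_eq0, (Ccv_unique (fun N =>
    Csub (Cmul (Csub C1 (Cmul a c)) (Cpsum (bailey_term (Cinv a) (Cmul a Q) (Cmul c Q) Q) N))
         (Cmul (Csub C1 c) (Cpsum (bailey_term a (Cdiv Q a) c Q) N)))).
  - apply Ccv_sub; apply Ccv_mul; try apply Ccv_const; apply bailey_sum_cv;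
      try (apply Cnorm_mul_lt_1; lra); assumption.
  - eapply Ccv_ext; [intro N; symmetry; apply bailey_partial_telescope|].
    apply (Ccv_eventually_dominated _ _ (fun N => M * Cnorm c ^ N * 8) N0).
    + intros N HN. specialize (HN0 N HN).
      rewrite Rabs_right, <- Cnorm_pow in HN0 by (apply Rle_ge, pow_le, Cnorm_ge0).
      set (x := Cpow Q N) in *. assert (Hx := Cnorm_pow_le_1 Q N (Rlt_le _ _ HQ)). fold x in Hx.
      rewrite Csub_0_r, Cnorm_mul, Cnorm_div by apply sub_pow_neq0.
      apply Rmult_le_compat; [apply Cnorm_ge0| |apply HM, Rle_refl|].
      { apply Rmult_le_pos; [apply Cnorm_ge0|].
        apply Rlt_le, Rinv_0_lt_compat, Cnorm_pos, sub_pow_neq0. }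
      replace 8 with (2 * (Cnorm a * 2) / (Cnorm a / 2)) by (field; lra).
      apply Rdiv_le_compat.
      * split; [apply Cnorm_ge0|]. rewrite !Cnorm_mul.
        assert (Cnorm (Csub C1 c) <= 2) by (generalize (Cnorm_1_sub_le c); lra).
        assert (Cnorm (Csub C1 (Cmul x x)) <= 2).
        { generalize (Cnorm_1_sub_le (Cmul x x)). rewrite Cnorm_mul.
          generalize (Cnorm_ge0 x). nra. }
        apply Rmult_le_compat; try apply Rmult_le_pos; try apply Rmult_le_compat_l;
          try apply Cnorm_ge0; lra.
      * split; [lra|]. generalize (Cnorm_sub_ge a x). lra.
    + replace 0 with (M * 0 * 8) by ring.
      apply is_lim_seq_mult'; [|apply is_lim_seq_const].
      apply is_lim_seq_mult'; [apply is_lim_seq_const|].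
      apply is_lim_seq_geom. rewrite Rabs_right; [exact Hc|apply Rle_ge, Cnorm_ge0].
Qed.

End Contiguous.

Lemma neq_pow_of_norm_between a Q n : Cnorm Q < Cnorm a -> Cnorm a < 1 -> a <> Cpow Q n.
Proof.
  intros H1 H2 E. assert (HQ1 : Cnorm Q <= 1) by lra.
  destruct n as [|n].
  - simpl in E. subst. rewrite Cnorm_C1 in H2. lra.
  - assert (H := Cnorm_pow_le Q (S n) HQ1 ltac:(lia)). rewrite <- E in H. lra.
Qed.

Lemma inv_neq_pow a Q n : Cnorm Q < 1 -> a <> C0 -> Cnorm a < 1 -> Cinv a <> Cpow Q n.
Proof.
  intros HQ Ha0 Ha E. assert (H := Cnorm_pow_le_1 Q n ltac:(lra)).
  rewrite <- E, Cnorm_inv in H by exact Ha0.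
  assert (Hp := Cnorm_pos a Ha0). assert (Cnorm a * / Cnorm a = 1) by (field; lra). nra.
Qed.

Lemma bailey_sum_functional a c Q : Cnorm Q < Cnorm a -> Cnorm a < 1 -> Cnorm c < 1 ->
  Cmul (Cmul (Csub C1 (Cmul a c)) (Csub C1 (Cmul (Cdiv Q a) c)))
       (bailey_sum a (Cdiv Q a) (Cmul (Cmul c Q) Q) Q) =
  Cmul (Cmul (Csub C1 c) (Csub C1 (Cmul c Q))) (bailey_sum a (Cdiv Q a) c Q).
Proof.
  intros HQa Ha Hc. assert (HQ : Cnorm Q < 1) by lra.
  assert (Ha0 : a <> C0) by (apply Cnorm_neq0; generalize (Cnorm_ge0 Q); lra).
  assert (Hc' : Cnorm (Cmul c Q) < 1) by (apply Cnorm_mul_lt_1; lra).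
  assert (H1 := bailey_contiguous a c Q Ha0 HQ Hc
                  (fun n => neq_pow_of_norm_between a Q n HQa Ha)).
  assert (H2 := bailey_contiguous (Cinv a) (Cmul c Q) Q (Cinv_neq0 a Ha0) HQ Hc'
                  (fun n => inv_neq_pow a Q n HQ Ha0 Ha)).
  replace (Cinv (Cinv a)) with a in H2 by fld.
  replace (Cmul (Cinv a) Q) with (Cdiv Q a) in H2 by fld.
  replace (Cdiv Q (Cinv a)) with (Cmul a Q) in H2 by fld.
  replace (Cmul (Cinv a) (Cmul c Q)) with (Cmul (Cdiv Q a) c) in H2 by fld.
  transitivity (Cmul (Csub C1 (Cmul a c))
    (Cmul (Csub C1 (Cmul (Cdiv Q a) c)) (bailey_sum a (Cdiv Q a) (Cmul (Cmul c Q) Q) Q))).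
  { fld. }
  rewrite H2.
  transitivity (Cmul (Csub C1 (Cmul c Q))
    (Cmul (Csub C1 (Cmul a c)) (bailey_sum (Cinv a) (Cmul a Q) (Cmul c Q) Q))).
  { fld. }
  rewrite H1. fld.
Qed.

Section QBailey.

Variables a c Q : Cplx.
Hypothesis HQa : Cnorm Q < Cnorm a.
Hypothesis Ha : Cnorm a < 1.
Hypothesis Hc : Cnorm c < 1.

Lemma QQ_norm_lt_1 : Cnorm (Cmul Q Q) < 1.
Proof. apply Cnorm_mul_lt_1; lra. Qed.

Lemma shifted_c_norm_le N : Cnorm (Cmul c (Cpow (Cmul Q Q) N)) <= Cnorm c.
Proof.
  rewrite Cnorm_mul. assert (H := Cnorm_pow_le_1 (Cmul Q Q) N (Rlt_le _ _ QQ_norm_lt_1)).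
  generalize (Cnorm_ge0 c) (Cnorm_ge0 (Cpow (Cmul Q Q) N)). nra.
Qed.

Lemma bailey_sum_iterate N :
  Cmul (qpoch c Q (2 * N)) (bailey_sum a (Cdiv Q a) c Q) =
  Cmul (Cmul (qpoch (Cmul a c) (Cmul Q Q) N) (qpoch (Cmul (Cdiv Q a) c) (Cmul Q Q) N))
       (bailey_sum a (Cdiv Q a) (Cmul c (Cpow (Cmul Q Q) N)) Q).
Proof.
  induction N as [|N IH]; [simpl; replace (Cmul c C1) with c by field; field|].
  set (cN := Cmul c (Cpow (Cmul Q Q) N)).
  assert (Hf := bailey_sum_functional a cN Q HQa Ha
                  (Rle_lt_trans _ _ _ (shifted_c_norm_le N) Hc)).
  replace (Cmul (Cmul cN Q) Q) with (Cmul c (Cpow (Cmul Q Q) (S N))) in Hf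
    by (unfold cN; simpl; field).
  replace (2 * S N)%nat with (S (S (2 * N))) by lia. rewrite !qpoch_S.
  replace (Cpow Q (S (2 * N))) with (Cmul (Cpow Q (2 * N)) Q) by reflexivity.
  rewrite Cpow_mul. replace (Cpow Q 2) with (Cmul Q Q) by (simpl; field).
  symmetry.
  transitivity (Cmul (Cmul (qpoch (Cmul a c) (Cmul Q Q) N) (qpoch (Cmul (Cdiv Q a) c) (Cmul Q Q) N))
    (Cmul (Cmul (Csub C1 (Cmul a cN)) (Csub C1 (Cmul (Cdiv Q a) cN)))
          (bailey_sum a (Cdiv Q a) (Cmul c (Cpow (Cmul Q Q) (S N))) Q))).
  { unfold cN. ring. }
  rewrite Hf.
  transitivity (Cmul (Cmul (Csub C1 cN) (Csub C1 (Cmul cN Q)))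
    (Cmul (Cmul (qpoch (Cmul a c) (Cmul Q Q) N) (qpoch (Cmul (Cdiv Q a) c) (Cmul Q Q) N))
          (bailey_sum a (Cdiv Q a) cN Q))).
  { ring. }
  unfold cN. rewrite <- IH. ring.
Qed.

Theorem q_bailey_sum X Y Z :
  qpoch_inf_is (Cmul a c) (Cmul Q Q) X ->
  qpoch_inf_is (Cmul (Cdiv Q a) c) (Cmul Q Q) Y ->
  qpoch_inf_is c Q Z ->
  Ccv (Cpsum (bailey_term a (Cdiv Q a) c Q)) (Cdiv (Cmul X Y) Z).
Proof.
  intros HX HY HZ. assert (HQ : Cnorm Q < 1) by lra.
  assert (HZ0 := qpoch_inf_neq0 c Q Z HQ Hc HZ).
  destruct (bailey_sum_near_1 a (Cdiv Q a) Q (Cnorm c) HQ) as [K HK].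
  { split; [apply Cnorm_ge0|exact Hc]. }
  assert (Htail : Ccv (fun N => bailey_sum a (Cdiv Q a) (Cmul c (Cpow (Cmul Q Q) N)) Q) C1).
  { apply (Ccv_eventually_dominated _ _ (fun N => K * (Cnorm c * Cnorm (Cmul Q Q) ^ N)) 0).
    - intros N _. rewrite <- Cnorm_pow, <- Cnorm_mul. apply HK, shifted_c_norm_le.
    - replace 0 with (K * (Cnorm c * 0)) by ring.
      apply is_lim_seq_mult'; [apply is_lim_seq_const|].
      apply is_lim_seq_mult'; [apply is_lim_seq_const|].
      apply is_lim_seq_geom. rewrite Rabs_right; [apply QQ_norm_lt_1|apply Rle_ge, Cnorm_ge0]. }
  assert (E : Cmul Z (bailey_sum a (Cdiv Q a) c Q) = Cmul (Cmul X Y) C1).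
  { apply (Ccv_unique (fun N => Cmul (qpoch c Q (2 * N)) (bailey_sum a (Cdiv Q a) c Q))).
    - apply Ccv_mul; [|apply Ccv_const].
      apply (Ccv_subseq (fun n => qpoch c Q n)); [intro; lia|exact HZ].
    - eapply Ccv_ext; [intro N; symmetry; apply bailey_sum_iterate|].
      apply Ccv_mul; [apply Ccv_mul|]; assumption. }
  replace (Cdiv (Cmul X Y) Z) with (bailey_sum a (Cdiv Q a) c Q).
  - apply bailey_sum_cv; assumption.
  - replace (Cmul X Y) with (Cmul Z (bailey_sum a (Cdiv Q a) c Q)) by (rewrite E; field). fld.
Qed.

End QBailey.

Lemma sign_pow_dissection q z n :
  Cmul (Cmul (Cpow (RtoC (-1)) n) z) (Cpow q (2 * n * n + 4 * n)) =
  Cmul (Cmul z (Cpow (Copp (Cpow q 6)) n)) (Cpow (Cpow q 4) (tri n)).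
Proof.
  replace (Copp (Cpow q 6)) with (Cmul (RtoC (-1)) (Cpow q 6))
    by (unfold RtoC, Copp, Cmul; simpl; f_equal; ring).
  assert (H := tri_double n).
  replace (2 * n * n + 4 * n)%nat with (6 * n + 4 * tri n)%nat by nia.
  rewrite Cpow_mul_l, Cpow_add, <- !Cpow_mul. ring.
Qed.

Lemma qpoch_q4_split q N :
  qpoch (Cpow q 4) (Cpow q 4) (2 * S N) =
  Cmul (Cmul (qpoch (Cpow q 8) (Cpow q 8) (S N)) (qpoch (Cpow q 2) (Cpow q 4) (S N)))
       (Cmul (Csub C1 (Copp (Cpow q 2))) (qpoch (Copp (Cpow q 6)) (Cpow q 4) N)).
Proof.
  rewrite qpoch_double.
  replace (qpoch (Cpow q 4) (Cmul (Cpow q 4) (Cpow q 4)) (S N))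
    with (qpoch (Cmul (Cpow q 2) (Cpow q 2)) (Cmul (Cpow q 4) (Cpow q 4)) (S N))
    by (f_equal; simpl; ring).
  rewrite <- qpoch_mul_opp, (qpoch_S_shift (Copp (Cpow q 2))).
  replace (Cmul (Copp (Cpow q 2)) (Cpow q 4)) with (Copp (Cpow q 6)) by (simpl; ring).
  replace (Cmul (Cpow q 4) (Cpow q 4)) with (Cpow q 8) by (simpl; ring).
  ring.
Qed.

Lemma qpoch_q4_inf_split q E P D Z :
  qpoch_inf_is (Cpow q 4) (Cpow q 4) E -> qpoch_inf_is (Cpow q 8) (Cpow q 8) P ->
  qpoch_inf_is (Cpow q 2) (Cpow q 4) D -> qpoch_inf_is (Copp (Cpow q 6)) (Cpow q 4) Z ->
  E = Cmul (Cmul P D) (Cmul (Csub C1 (Copp (Cpow q 2))) Z).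
Proof.
  intros HE HP HD HZ. unfold qpoch_inf_is in *.
  apply (Ccv_unique (fun N => qpoch (Cpow q 4) (Cpow q 4) (2 * S N))).
  - apply (Ccv_subseq (fun n => qpoch (Cpow q 4) (Cpow q 4) n)); [intro; lia|exact HE].
  - eapply Ccv_ext; [intro N; symmetry; apply qpoch_q4_split|].
    apply Ccv_mul; [apply Ccv_mul|apply Ccv_mul; [apply Ccv_const|exact HZ]];
      apply (Ccv_subseq (fun n => qpoch _ _ n)); solve [auto].
Qed.

Definition lhs_term q n : Cplx :=
  Cdiv (Cmul (Cmul (Cpow (RtoC (-1)) n) (qpoch q (Cpow q 2) (2 * n)))
             (Cpow q (2 * n * n + 4 * n)))
       (Cmul (qpoch (Cpow q 8) (Cpow q 8) n) (qpoch (Copp (Cpow q 2)) (Cpow q 4) (S n))).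

Lemma lhs_term_as_bailey q n : q <> C0 -> Cnorm q < 1 ->
  lhs_term q n = Cmul (bailey_term q (Cdiv (Cpow q 4) q) (Copp (Cpow q 6)) (Cpow q 4) n)
                      (Cinv (Csub C1 (Copp (Cpow q 2)))).
Proof.
  intros Hq0 Hq. assert (Hp := fun k => Cnorm_pow_lt_1 q k Hq).
  unfold lhs_term, bailey_term.
  rewrite qpoch_double, qpoch_S_shift, sign_pow_dissection.
  replace (Cmul (Cpow q 2) (Cpow q 2)) with (Cpow q 4) by (simpl; ring).
  replace (Cmul q (Cpow q 2)) with (Cdiv (Cpow q 4) q) by (simpl; fld).
  replace (Cmul (Copp (Cpow q 2)) (Cpow q 4)) with (Copp (Cpow q 6)) by (simpl; ring).
  replace (Cpow q 8) with (Cmul (Cpow q 4) (Cpow q 4)) by (simpl; ring).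
  assert (H1 := qpoch_neq0 (Copp (Cpow q 6)) (Cpow q 4) n (Hp 4%nat ltac:(lia))
                  ltac:(rewrite Cnorm_opp; apply Hp; lia)).
  assert (Hq8 : Cnorm (Cmul (Cpow q 4) (Cpow q 4)) < 1)
    by (apply Cnorm_mul_lt_1; [|apply Rlt_le]; apply Hp; lia).
  assert (H2 := qpoch_neq0 _ _ n Hq8 Hq8).
  assert (H3 : Csub C1 (Copp (Cpow q 2)) <> C0)
    by (apply Csub1_neq0; rewrite Cnorm_opp; apply Hp; lia).
  fld.
Qed.

Lemma lhs_term_cv_at_0 : Ccv (Cpsum (lhs_term C0)) C1.
Proof.
  apply (Ccv_eventually_dominated _ _ (fun _ => 0) 1); [|apply is_lim_seq_const].
  intros [|n] Hn; [lia|]. clear Hn.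
  replace (Cpsum (lhs_term C0) (S n)) with C1.
  { replace (Csub C1 C1) with C0 by field. rewrite Cnorm_C0. lra. }
  symmetry. induction n as [|n IH].
  - unfold Cpsum, lhs_term. rewrite !qpoch_S, !Cpow_C0_S. simpl.
    replace (Csub C1 (Cmul (Copp C0) C1)) with C1 by field. fld.
  - change (Cpsum (lhs_term C0) (S (S n)))
      with (Cadd (Cpsum (lhs_term C0) (S n)) (lhs_term C0 (S n))).
    rewrite IH. unfold lhs_term.
    replace (2 * S n * S n + 4 * S n)%nat with (S (2 * S n * S n + 4 * n + 3)) by lia.
    rewrite (Cpow_C0_S (2 * S n * S n + 4 * n + 3)). unfold Cdiv. ring.
Qed.

Lemma lhs_term_series q A B P D E : Cnorm q < 1 ->
  qpoch_inf_is (Copp (Cpow q 9)) (Cpow q 8) A -> qpoch_inf_is (Copp (Cpow q 7)) (Cpow q 8) B ->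
  qpoch_inf_is (Cpow q 8) (Cpow q 8) P -> qpoch_inf_is (Cpow q 2) (Cpow q 4) D ->
  qpoch_inf_is (Cpow q 4) (Cpow q 4) E ->
  Ccv (Cpsum (lhs_term q)) (Cdiv (Cmul (Cmul (Cmul A B) P) D) E).
Proof.
  intros hq HA HB HP HD HE.
  destruct (Req_dec (Cnorm q) 0) as [H0|H0].
  - apply Cnorm_eq0 in H0. subst q.
    apply qpoch_inf_trivial in HA, HB, HP, HD, HE; try (simpl; ring). subst.
    replace (Cdiv (Cmul (Cmul (Cmul C1 C1) C1) C1) C1) with C1 by fld.
    apply lhs_term_cv_at_0.
  - assert (Hq0 : q <> C0) by (intro; subst; apply H0, Cnorm_C0).
    assert (Hp := fun k => Cnorm_pow_lt_1 q k hq).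
    assert (Hp' : forall k, (1 <= k)%nat -> Cnorm (Copp (Cpow q k)) < 1)
      by (intros; rewrite Cnorm_opp; auto).
    assert (HQa : Cnorm (Cpow q 4) < Cnorm q)
      by (apply Cnorm_pow_lt; [split; [apply Cnorm_pos|]|]; auto).
    destruct (qpoch_inf_exists (Copp (Cpow q 6)) _ (Hp 4%nat ltac:(lia))) as [Z HZ].
    assert (HP0 := qpoch_inf_neq0 _ _ _ (Hp 8%nat ltac:(lia)) (Hp 8%nat ltac:(lia)) HP).
    assert (HD0 := qpoch_inf_neq0 _ _ _ (Hp 4%nat ltac:(lia)) (Hp 2%nat ltac:(lia)) HD).
    assert (HZ0 := qpoch_inf_neq0 _ _ _ (Hp 4%nat ltac:(lia)) (Hp' 6%nat ltac:(lia)) HZ).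
    assert (Hk : Csub C1 (Copp (Cpow q 2)) <> C0) by (apply Csub1_neq0, Hp'; lia).
    replace (Copp (Cpow q 7)) with (Cmul q (Copp (Cpow q 6))) in HB by (simpl; ring).
    replace (Copp (Cpow q 9)) with (Cmul (Cdiv (Cpow q 4) q) (Copp (Cpow q 6))) in HA
      by (simpl; fld).
    replace (Cpow q 8) with (Cmul (Cpow q 4) (Cpow q 4)) in HA, HB by (simpl; ring).
    rewrite (qpoch_q4_inf_split q E P D Z HE HP HD HZ).
    replace (Cdiv (Cmul (Cmul (Cmul A B) P) D)
                  (Cmul (Cmul P D) (Cmul (Csub C1 (Copp (Cpow q 2))) Z)))
      with (Cmul (Cdiv (Cmul B A) Z) (Cinv (Csub C1 (Copp (Cpow q 2))))) by fld.
    eapply Ccv_ext.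
    { intro N. symmetry. rewrite (Cpsum_ext _ _ N (fun n => lhs_term_as_bailey q n Hq0 hq)).
      apply Cpsum_mul_r. }
    apply Ccv_mul; [|apply Ccv_const].
    exact (q_bailey_sum q (Copp (Cpow q 6)) (Cpow q 4) HQa hq (Hp' 6%nat ltac:(lia))
             B A Z HB HA HZ).
Qed.

Theorem mainTheorem6 (q : Cplx) (hq : Cnorm q < 1) :
  exists A B P D E : Cplx,
    qpoch_inf_is (Copp (Cpow q 9)) (Cpow q 8) A /\
    qpoch_inf_is (Copp (Cpow q 7)) (Cpow q 8) B /\
    qpoch_inf_is (Cpow q 8) (Cpow q 8) P /\
    qpoch_inf_is (Cpow q 2) (Cpow q 4) D /\
    qpoch_inf_is (Cpow q 4) (Cpow q 4) E /\
    E <> C0 /\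
    Ccv (Cpsum (fun n =>
           Cdiv (Cmul (Cmul (Cpow (RtoC (-1)) n) (qpoch q (Cpow q 2) (2 * n)))
                      (Cpow q (2 * n * n + 4 * n)))
                (Cmul (qpoch (Cpow q 8) (Cpow q 8) n)
                      (qpoch (Copp (Cpow q 2)) (Cpow q 4) (S n)))))
        (Cdiv (Cmul (Cmul (Cmul A B) P) D) E).
Proof.
  assert (Hp := fun k => Cnorm_pow_lt_1 q k hq).
  destruct (qpoch_inf_exists (Copp (Cpow q 9)) _ (Hp 8%nat ltac:(lia))) as [A HA].
  destruct (qpoch_inf_exists (Copp (Cpow q 7)) _ (Hp 8%nat ltac:(lia))) as [B HB].
  destruct (qpoch_inf_exists (Cpow q 8) _ (Hp 8%nat ltac:(lia))) as [P HP].
  destruct (qpoch_inf_exists (Cpow q 2) _ (Hp 4%nat ltac:(lia))) as [D HD].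
  destruct (qpoch_inf_exists (Cpow q 4) _ (Hp 4%nat ltac:(lia))) as [E HE].
  exists A, B, P, D, E. do 5 (split; [assumption|]). split.
  - exact (qpoch_inf_neq0 _ _ _ (Hp 4%nat ltac:(lia)) (Hp 4%nat ltac:(lia)) HE).
  - exact (lhs_term_series q A B P D E hq HA HB HP HD HE).
Qed.
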